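(* Let $\mathcal{F}$ be a Furstenberg family. Every dynamical system $(X,T)$ is dynamically compact with respect to $\mathcal{F}$ if and only if $\mathcal{F}$ has the finite intersection property.
   Context: A dynamical system $(X,T)$ consists of a compact metric space $X$ with more than one point and without isolated points, and a continuous surjection $T:X\to X$. A (Furstenberg) family is a collection $\mathcal{F}$ of subsets of $\mathbb{Z}_+=\{0,1,2,\dots\}$ that is hereditary upward ($F_1\subset F_2$, $F_1\in\mathcal{F}$ imply $F_2\in\mathcal{F}$). For $F\subset\mathbb{Z}_+$ and $x\in X$ let $T^Fx=\{T^ix:i\in F\}$. The $\omega_{\mathcal{F}}$-limit set of $x$ is $\omega_{\mathcal{F}}(x)=\bigcap_{F\in\mathcal{F}}\overline{T^Fx}$. The system $(X,T)$ is dynamically compact with respect to $\mathcal{F}$ if $\omega_{\mathcal{F}}(x)\neq\varnothing$ for all $x\in X$. $\mathcal{F}$ has the finite intersection property if the intersection of any finitely many elements of $\mathcal{F}$ is nonempty. *)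

From HB Require Import structures.
From mathcomp Require Import all_boot all_order all_algebra.
From mathcomp Require Import all_classical all_reals all_analysis.
From mathcomp Require Import Rstruct Rstruct_topology.
Set Implicit Arguments. Unset Strict Implicit. Unset Printing Implicit Defensive.
Import Order.TTheory GRing.Theory Num.Theory.
Local Open Scope classical_set_scope.

Definition furstenberg_family (Fam : set (set nat)) : Prop :=
  forall A B : set nat, A `<=` B -> Fam A -> Fam B.

Definition finite_intersection_property (Fam : set (set nat)) : Prop :=
  forall s : seq (set nat), (forall A, A \in s -> Fam A) ->
    exists k : nat, forall A, A \in s -> A k.

Definition dynamical_system (X : metricType Rdefinitions.R) (T : X -> X) : Prop :=
  [/\ compact [set: X],
      (exists x y : X, x <> y),
      (forall x : X, ~ open [set x]),
      continuous T
    & forall y : X, exists x : X, T x = y].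

Definition orbit_along {X : Type} (T : X -> X) (F : set nat) (x : X) : set X :=
  (fun i => iter i T x) @` F.

Definition omega_fam {X : topologicalType} (T : X -> X) (Fam : set (set nat))
  (x : X) : set X :=
  \bigcap_(F in Fam) closure (orbit_along T F x).

Definition dynamically_compact {X : topologicalType} (T : X -> X)
  (Fam : set (set nat)) : Prop :=
  forall x : X, omega_fam T Fam x !=set0.

From HB Require Import structures.
From mathcomp Require Import all_boot all_order all_algebra.
From mathcomp Require Import all_classical all_reals all_analysis.
From mathcomp Require Import Rstruct Rstruct_topology.
Import Order.TTheory GRing.Theory Num.Theory.
Local Open Scope classical_set_scope.
Local Open Scope ring_scope.

(* If [Fam] has the finite intersection property, so has the collection of
   the orbit pieces [T^F x] for [F] in [Fam] (a common element [k] of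
   [F_1, ..., F_m] gives the common point [T^k x]), hence by compactness
   the closures meet.
   Conversely, let [F_1, ..., F_m] in [Fam] have empty intersection and
   choose [c k] with [k] not in [F_(c k)].  On the Cantor space of bit
   sequences with [T] the [m]-fold shift, let [x] be the point whose [k]-th
   block of length [m] is the indicator of [c k], so that [T^k x] starts
   with that block.  A point [p] of [omega_F(x)] starts, for every [i], with
   the block of some [c k] with [k] in [F_i]; taking [i] to be the index
   read off [p] gives [k] in [F_(c k)], a contradiction. *)

Local Notation R := Rdefinitions.R.

Record bitstream := Bitstream { bit :> nat -> bool }.
HB.instance Definition _ := gen_eqMixin bitstream.
HB.instance Definition _ := gen_choiceMixin bitstream.

Lemma bitstream_ext (x y : bitstream) : x =1 y -> x = y.
Proof. by case: x; case: y => f g fg; congr Bitstream; apply: funext => j. Qed.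

(* The value [0] for [x = y] is junk; [bitstream_dist] treats that case apart. *)
Definition first_diff (x y : bitstream) : nat :=
  if pselect (exists j, x j != y j) is left ex then ex_minn ex else 0%N.

Lemma first_diffP (x y : bitstream) : x <> y ->
  x (first_diff x y) != y (first_diff x y) /\
  forall j, (j < first_diff x y)%N -> x j = y j.
Proof.
move=> xy; rewrite /first_diff; case: pselect => [ex|nex]; last first.
  exfalso; apply: xy; apply: bitstream_ext => j.
  by apply: contrapT => /eqP ?; apply: nex; exists j.
case: ex_minnP => m xym m_min; split => // j jm; apply: contrapT => /eqP /m_min.
by rewrite leqNgt jm.
Qed.
Arguments first_diffP {x y}.

Lemma first_diff_gt {x y : bitstream} {N : nat} : x <> y ->
  (forall j, (j <= N)%N -> x j = y j) -> (N < first_diff x y)%N.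
Proof.
move=> /first_diffP[neq _] agree; rewrite ltnNge; apply/negP => /agree eq.
by rewrite eq eqxx in neq.
Qed.

Lemma first_diffC (x y : bitstream) : first_diff x y = first_diff y x.
Proof.
have [->//|xy] := pselect (x = y).
have [xy_neq xy_eq] := first_diffP xy.
have [yx_neq yx_eq] := first_diffP (nesym xy).
apply/eqP; rewrite eqn_leq; apply/andP; split; rewrite leqNgt; apply/negP.
  by move=> /xy_eq eq; rewrite eq eqxx in yx_neq.
by move=> /yx_eq eq; rewrite eq eqxx in xy_neq.
Qed.

Lemma first_diff_ultra {x y z : bitstream} : x <> y -> y <> z -> x <> z ->
  (minn (first_diff x y) (first_diff y z) <= first_diff x z)%N.
Proof.
move=> /first_diffP[_ xy_eq] /first_diffP[_ yz_eq] /first_diffP[xz_neq _].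
rewrite leqNgt; apply/negP; rewrite leq_min => /andP[lt_xy lt_yz].
by rewrite (xy_eq _ lt_xy) (yz_eq _ lt_yz) eqxx in xz_neq.
Qed.

Lemma pow2V_gt0 n : (0 < 2 ^- n :> R).
Proof. by rewrite invr_gt0 exprn_gt0. Qed.

Lemma pow2V_le {m n} : (m <= n)%N -> (2 ^- n <= 2 ^- m :> R).
Proof. by move=> mn; rewrite lef_pV2 ?posrE ?exprn_gt0 // ler_eXn2l // ltr1n. Qed.

Lemma pow2V_lt {m n} : (m < n)%N -> (2 ^- n < 2 ^- m :> R).
Proof. by move=> mn; rewrite ltf_pV2 ?posrE ?exprn_gt0 // ltr_eXn2l // ltr1n. Qed.

Lemma pow2V_small {r : R} : 0 < r -> exists n, (2 ^- n < r).
Proof.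
move=> r0; have [N _ /(_ N (leqnn N))] := near_infty_natSinv_expn_lt (PosNum r0).
by rewrite /= div1r; exists N.
Qed.

Definition bitstream_dist (x y : bitstream) : R :=
  if x == y then 0 else 2 ^- first_diff x y.

Lemma bitstream_distxx x : bitstream_dist x x = 0.
Proof. by rewrite /bitstream_dist eqxx. Qed.

Lemma bitstream_dist_eq0 x y : bitstream_dist x y = 0 -> x = y.
Proof.
rewrite /bitstream_dist; case: eqP => // _ d0.
by have := pow2V_gt0 (first_diff x y); rewrite d0 ltxx.
Qed.

Lemma bitstream_distC x y : bitstream_dist x y = bitstream_dist y x.
Proof. by rewrite /bitstream_dist first_diffC eq_sym. Qed.

Lemma bitstream_dist_ge0 x y : 0 <= bitstream_dist x y.
Proof. by rewrite /bitstream_dist; case: eqP => // _; rewrite ltW ?pow2V_gt0. Qed.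

Lemma bitstream_dist_triangle y x z :
  bitstream_dist x z <= bitstream_dist x y + bitstream_dist y z.
Proof.
have [<-|xy] := pselect (x = y); first by rewrite bitstream_distxx add0r.
have [<-|yz] := pselect (y = z); first by rewrite bitstream_distxx addr0.
have [<-|xz] := pselect (x = z).
  by rewrite bitstream_distxx addr_ge0 ?bitstream_dist_ge0.
rewrite /bitstream_dist; do 3!case: eqP => // _.
apply: le_trans (pow2V_le (first_diff_ultra xy yz xz)) _.
by case: leqP => _; rewrite ?lerDl ?lerDr ltW ?pow2V_gt0.
Qed.

HB.instance Definition _ := @isMetric.Build R bitstream bitstream_dist
  bitstream_distxx bitstream_dist_eq0 bitstream_distC bitstream_dist_triangle.

Definition cylinder (x : bitstream) (N : nat) : set bitstream :=
  [set z | forall j, (j <= N)%N -> x j = z j].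

Lemma ball_pow2V (x : bitstream) N : ball x (2 ^- N) = cylinder x N.
Proof.
rewrite ballEmdist /= /mdist /= /bitstream_dist; apply/seteqP; split=> z /=.
  case: eqP => [<- //|xz dxz j jN].
  have [_ -> //] := first_diffP xz; apply: leq_ltn_trans jN _.
  by rewrite ltnNge; apply: contraTN dxz => /pow2V_le; rewrite leNgt => ->.
by case: eqP => [_ _|xz /(first_diff_gt xz) /pow2V_lt //]; apply: pow2V_gt0.
Qed.

Lemma nbhs_bitstreamP (x : bitstream) (A : set bitstream) :
  nbhs x A <-> exists N, cylinder x N `<=` A.
Proof.
split=> [/nbhs_ballP[e /= e0 xeA]|[N xNA]].
  have [N eN] := pow2V_small e0; exists N; rewrite -ball_pow2V => z xz.
  exact/xeA/(le_ball (ltW eN)).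
apply/nbhs_ballP; exists (2 ^- N); first exact: pow2V_gt0.
by rewrite ball_pow2V.
Qed.

Lemma near_cantor_prefix (x : cantor_space) N :
  \forall z \near x, forall j, (j <= N)%N -> x j = z j.
Proof.
have near_bit j : \forall z \near x, x j = z j.
  have /(@proj_continuous nat (fun=> bool) j x) : nbhs (x j) [set x j] by move=> b ->.
  by apply: filterS => z ->.
elim: N => [|N IH].
  by apply: filterS (near_bit 0%N) => z x0 j; rewrite leqn0 => /eqP ->.
apply: filterS2 IH (near_bit N.+1) => z xz xzN j.
by rewrite leq_eqVlt => /orP[/eqP -> //|]; apply: xz.
Qed.

Lemma bitstream_compact : compact [set: bitstream].
Proof.
have -> : [set: bitstream] = Bitstream @` [set: cantor_space].
  by apply/seteqP; split => // -[x] _; exists x.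
apply: continuous_compact cantor_space_compact.
apply: continuous_subspaceT => x A /nbhs_bitstreamP[N xNA].
by apply: filterS (near_cantor_prefix x N) => z xz; apply: xNA.
Qed.

Lemma bitstream_singleton_not_open (x : bitstream) : ~ open [set x].
Proof.
rewrite openE => /(_ x erefl) /nbhs_bitstreamP[N xNx].
pose z := Bitstream (fun j => if j == N.+1 then ~~ x j else x j).
have /(congr1 (bit ^~ N.+1)) : [set x] z.
  by apply: xNx => j jN /=; rewrite ifN // neq_ltn ltnS jN.
by rewrite /= eqxx; case: (x N.+1).
Qed.

Definition shift (n : nat) (x : bitstream) : bitstream :=
  Bitstream (fun j => x (j + n)%N).

Lemma shift_continuous n : continuous (shift n).
Proof.
move=> x A /nbhs_bitstreamP[N xNA]; apply/nbhs_bitstreamP; exists (N + n)%N.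
by move=> z xz; apply: xNA => j jN /=; apply: xz; rewrite leq_add2r.
Qed.

Lemma shift_surjective n y : exists x, shift n x = y.
Proof.
exists (Bitstream (fun j => if (j < n)%N then false else y (j - n)%N)).
by apply: bitstream_ext => j /=; rewrite ltnNge leq_addl addnK.
Qed.

Lemma shift_dynamical_system n : dynamical_system (shift n).
Proof.
split; [exact: bitstream_compact | | exact: bitstream_singleton_not_open |
        exact: shift_continuous | exact: shift_surjective].
exists (Bitstream (fun=> true)), (Bitstream (fun=> false)).
by move=> /(congr1 (bit ^~ 0%N)).
Qed.

Lemma iter_shift n k (x : bitstream) j : iter k (shift n) x j = x (j + k * n)%N.
Proof. by elim: k j => [|k IH] j /=; rewrite ?addn0 // IH mulSn addnA. Qed.

Definition blocks (n : nat) (c : nat -> nat) : bitstream :=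
  Bitstream (fun j => j %% n == c (j %/ n))%N.

Lemma iter_shift_blocks n c k j :
  (j < n)%N -> iter k (shift n) (blocks n c) j = (j == c k).
Proof.
move=> jn; rewrite iter_shift /= addnC modnMDl modn_small //.
by rewrite divnMDl ?divn_small ?addn0 //; apply: leq_ltn_trans jn.
Qed.

Lemma shift_not_dynamically_compact (Fam : set (set nat)) (s : seq (set nat))
    (c : nat -> nat) :
  (forall A, A \in s -> Fam A) ->
  (forall k, (c k < size s)%N /\ ~ nth set0 s (c k) k) ->
  ~ dynamically_compact (shift (size s)) Fam.
Proof.
set n := size s => sFam cP /(_ (blocks n c))[p p_omega].
have n_gt0 : (0 < n)%N by case: (cP 0%N) => c0n _; apply: leq_ltn_trans c0n.
have p_nbhs : nbhs p (cylinder p n) by apply/nbhs_bitstreamP; exists n.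
have p_block i : (i < n)%N ->
    exists2 k, nth set0 s i k & forall j, (j < n)%N -> p j = (j == c k).
  move=> i_n; have /p_omega : Fam (nth set0 s i) by apply/sFam/mem_nth.
  move=> /(_ _ p_nbhs)[_ [[k ki <-] pk]]; exists k => // j jn.
  by rewrite (pk j (ltnW jn)) iter_shift_blocks.
have [k0 _ p0] := p_block 0%N n_gt0.
have [c0_n _] := cP k0.
have [k1 k1_in p1] := p_block (c k0) c0_n.
have /eqP c01 : c k0 == c k1 by rewrite -p1 // p0 // eqxx.
by have [_] := cP k1; rewrite -c01.
Qed.

Lemma fip_of_dynamically_compact (Fam : set (set nat)) :
  (forall (X : metricType R) (T : X -> X),
      dynamical_system T -> dynamically_compact T Fam) ->
  finite_intersection_property Fam.
Proof.
move=> dc; apply: contrapT => /existsNP[s /not_implyP[sFam /forallNP no_common]].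
have /choice[c cP] : forall k, exists i, (i < size s)%N /\ ~ nth set0 s i k.
  move=> k; have /existsNP[A /not_implyP[As nAk]] := no_common k.
  by exists (index A s); rewrite index_mem nth_index.
exact: shift_not_dynamically_compact sFam cP (dc _ _ (shift_dynamical_system _)).
Qed.

Lemma dynamically_compact_of_fip {X : topologicalType} (T : X -> X)
    (Fam : set (set nat)) :
  compact [set: X] -> finite_intersection_property Fam ->
  dynamically_compact T Fam.
Proof.
move=> X_compact fip x.
have [[F0 F0_Fam]|no_F] := pselect (exists F, Fam F); last first.
  by exists x => F /= F_Fam; case: no_F; exists F.
have orbit_finI : finI Fam (fun F => orbit_along T F x).
  move=> D D_Fam; have [k Dk] := fip (finmap.enum_fset D) (fun A AD => set_mem (D_Fam A AD)).
  by exists (iter k T x) => F /= FD; exists k => //; apply: Dk.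
have [|p [_ p_cl]] := X_compact _ (finI_filter orbit_finI).
  by exists (orbit_along T F0 x); [apply: finI_from1|].
exists p => F F_Fam B p_B; apply: (p_cl (orbit_along T F x) B _ p_B).
by exists (orbit_along T F x); [apply: finI_from1|].
Qed.

Theorem theorem3p1 (Fam : set (set nat)) :
  furstenberg_family Fam ->
  ((forall (X : metricType Rdefinitions.R) (T : X -> X),
      dynamical_system T -> dynamically_compact T Fam)
   <-> finite_intersection_property Fam).
Proof.
move=> _; split; first exact: fip_of_dynamically_compact.
by move=> fip X T [X_compact _ _ _ _]; apply: dynamically_compact_of_fip.
Qed.
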